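(* Let $R$ be a discrete valuation domain with maximal ideal $P$. Then the injective hull $E(R/P)$ of $R/P$ and the field of fractions $Q(R)$ of $R$ are not pseudo-absorbing primary multiplication $R$-modules. Moreover, the cyclic $R$-modules $R$ and $R/P^n$ (for every integer $n\ge1$) are pseudo-absorbing primary multiplication $R$-modules.
   Context: A proper ideal $I$ of $R$ is 2-absorbing primary if whenever $a,b,c\in R$ and $abc\in I$ then $ab\in I$ or $ac\in\sqrt I$ or $bc\in\sqrt I$. A proper submodule $N$ of an $R$-module $M$ is pseudo-absorbing primary if $(N:_RM)=\{r\in R:rM\subseteq N\}$ is a 2-absorbing primary ideal. $M$ is a pseudo-absorbing primary multiplication module if for every pseudo-absorbing primary submodule $N$ of $M$ there is an ideal $I$ of $R$ with $N=IM$. *)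

From HB Require Import structures.
From mathcomp Require Import all_boot all_order all_algebra.
From mathcomp Require Import fraction.
Set Implicit Arguments. Unset Strict Implicit. Unset Printing Implicit Defensive.
Import GRing.Theory.
Local Open Scope ring_scope.

Section Ideals.
Variable R : comNzRingType.

Definition is_ideal (I : R -> Prop) : Prop :=
  [/\ I 0, (forall x y, I x -> I y -> I (x + y)) & (forall r x, I x -> I (r * x))].

Definition proper_ideal (I : R -> Prop) : Prop := is_ideal I /\ ~ I 1.

Definition rad (I : R -> Prop) : R -> Prop := fun x => exists n : nat, I (x ^+ n).

Definition two_absorbing_primary (I : R -> Prop) : Prop :=
  proper_ideal I /\
  forall a b c, I (a * b * c) -> [\/ I (a * b), rad I (a * c) | rad I (b * c)].

Definition principal_ideal (I : R -> Prop) : Prop :=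
  exists a : R, forall x, I x <-> exists r : R, x = r * a.

Definition maximal_ideal (I : R -> Prop) : Prop :=
  proper_ideal I /\
  forall J : R -> Prop, is_ideal J -> (forall x, I x -> J x) ->
    (forall x, J x <-> I x) \/ (forall x, J x).

Definition ideal_mul (I J : R -> Prop) : R -> Prop := fun x =>
  exists s : seq (R * R), (forall p, p \in s -> I p.1 /\ J p.2) /\
                          x = \sum_(p <- s) p.1 * p.2.

Fixpoint ideal_pow (P : R -> Prop) (n : nat) : R -> Prop :=
  match n with
  | 0%N => fun _ => True
  | k.+1 => ideal_mul (ideal_pow P k) P
  end.
End Ideals.

(* A discrete valuation domain: a local principal ideal domain that is not a
   field.  [DVD_with_max R P]: R is a DVD and P is its (unique) maximal ideal. *)
Definition DVD_with_max (R : idomainType) (P : R -> Prop) : Prop :=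
  [/\ (forall I : R -> Prop, is_ideal I -> principal_ideal I),
      (exists x : R, x != 0 /\ x \isn't a GRing.unit),
      maximal_ideal P &
      (forall Q : R -> Prop, maximal_ideal Q -> forall x, Q x <-> P x)].

Section Modules.
Variables (R : comNzRingType) (M : lmodType R).

Definition is_submodule (N : M -> Prop) : Prop :=
  [/\ N 0, (forall x y, N x -> N y -> N (x + y)) & (forall (r : R) x, N x -> N (r *: x))].

Definition proper_submodule (N : M -> Prop) : Prop :=
  is_submodule N /\ exists m : M, ~ N m.

Definition colon (N : M -> Prop) : R -> Prop := fun r => forall m : M, N (r *: m).

Definition pseudo_absorbing_primary (N : M -> Prop) : Prop :=
  proper_submodule N /\ two_absorbing_primary (colon N).

Definition ideal_smul (I : R -> Prop) : M -> Prop := fun x =>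
  exists s : seq (R * M), (forall p, p \in s -> I p.1) /\
                          x = \sum_(p <- s) p.1 *: p.2.

Definition pap_multiplication_module : Prop :=
  forall N : M -> Prop, pseudo_absorbing_primary N ->
    exists I : R -> Prop, is_ideal I /\ forall x, N x <-> ideal_smul I x.

Definition annihilates (I : R -> Prop) (m : M) : Prop :=
  forall r : R, r *: m = 0 <-> I r.

(* M is isomorphic to R/I via 1 + I |-> m : m generates M and ann(m) = I *)
Definition cyclic_iso_quot (I : R -> Prop) (m : M) : Prop :=
  annihilates I m /\ forall x : M, exists r : R, x = r *: m.
End Modules.

Definition injective_module (R : comNzRingType) (E : lmodType R) : Prop :=
  forall (A B : lmodType R) (g : {linear A -> B}) (h : {linear A -> E}),
    injective g -> exists k : {linear B -> E}, forall a, k (g a) = h a.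

(* (E, e) is an injective hull of R/P: E is injective, r + P |-> r e is a
   (well-defined, injective) embedding R/P -> E (i.e. ann(e) = P), and its
   image R e is essential in E. *)
Definition injective_hull_of_quotient (R : comNzRingType) (P : R -> Prop)
    (E : lmodType R) (e : E) : Prop :=
  [/\ injective_module E, annihilates P e &
      forall N : E -> Prop, is_submodule N -> (exists x, N x /\ x <> 0) ->
        exists r : R, N (r *: e) /\ r *: e <> 0].

(* The field of fractions Q(R) as an R-module, r *: q := (r/1) * q *)
Definition fracmod (R : idomainType) : Type := {fraction R}.
HB.instance Definition _ (R : idomainType) := GRing.Zmodule.on (fracmod R).

Section FracMod.
Variable R : idomainType.
Definition fracmod_scale (r : R) (q : fracmod R) : fracmod R := tofrac r * q.
Lemma fracmod_scalerA a b v :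
  fracmod_scale a (fracmod_scale b v) = fracmod_scale (a * b) v.
Proof. by rewrite /fracmod_scale rmorphM mulrA. Qed.
Lemma fracmod_scale1r : left_id 1 fracmod_scale.
Proof. by move=> v; rewrite /fracmod_scale rmorph1 mul1r. Qed.
Lemma fracmod_scalerDr : right_distributive fracmod_scale +%R.
Proof. by move=> a u v; rewrite /fracmod_scale mulrDr. Qed.
Lemma fracmod_scalerDl v : {morph fracmod_scale^~ v : a b / a + b}.
Proof. by move=> a b; rewrite /fracmod_scale rmorphD mulrDl. Qed.
End FracMod.

HB.instance Definition _ (R : idomainType) :=
  GRing.Zmodule_isLmodule.Build R (fracmod R)
    (@fracmod_scalerA R) (@fracmod_scale1r R) (@fracmod_scalerDr R)
    (@fracmod_scalerDl R).

From HB Require Import structures.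
From mathcomp Require Import all_boot all_order all_algebra.
From mathcomp Require Import fraction.
From Stdlib Require Import Classical.
Set Implicit Arguments. Unset Strict Implicit. Unset Printing Implicit Defensive.
Local Open Scope ring_scope.
Import GRing.Theory.

(* A cyclic module M = Rm is a multiplication module: every submodule N equals
   (N :_R M) M.  On the other hand E(R/P) and Q(R) are divisible.  In a
   divisible module over a domain the colon ideal of a proper submodule is 0,
   a prime ideal, so every proper submodule is pseudo-absorbing primary; yet
   IM is either 0 or M for every ideal I, so a proper nonzero submodule such as
   Re is not of the form IM. *)

Section Multiplication.
Variables (R : comNzRingType) (M : lmodType R).

Definition cyclic_submodule (e : M) : M -> Prop := fun x => exists r : R, x = r *: e.

Lemma cyclic_submodule_is_submodule (e : M) : is_submodule (cyclic_submodule e).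
Proof.
split; first by exists 0; rewrite scale0r.
  by move=> _ _ [a ->] [b ->]; exists (a + b); rewrite scalerDl.
by move=> r _ [a ->]; exists (r * a); rewrite scalerA.
Qed.

Lemma is_ideal_colon (N : M -> Prop) : is_submodule N -> is_ideal (colon N).
Proof.
case=> N0 ND NZ; split; first by move=> m; rewrite scale0r.
  by move=> a b Na Nb m; rewrite scalerDl; apply: ND.
by move=> r a Na m; rewrite -scalerA; apply: NZ.
Qed.

Lemma ideal_smul_colon (N : M -> Prop) x :
  is_submodule N -> ideal_smul (colon N) x -> N x.
Proof.
case=> N0 ND _ [s [sN ->]]; rewrite big_seq; apply: big_ind => // p /sN Np.
exact: Np.
Qed.

Lemma cyclic_submodule_colon (m : M) (N : M -> Prop) :
  (forall x, cyclic_submodule m x) -> is_submodule N ->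
  forall x, N x <-> ideal_smul (colon N) x.
Proof.
move=> gen subN x; split; last exact: ideal_smul_colon.
have [r ->] := gen x; case: subN => _ _ NZ Nrm.
exists [:: (r, m)]; split; last by rewrite big_seq1.
move=> p; rewrite mem_seq1 => /eqP -> y /=; have [t ->] := gen y.
by rewrite scalerA mulrC -scalerA; apply: NZ.
Qed.

Lemma cyclic_pap_multiplication (m : M) :
  (forall x, cyclic_submodule m x) -> pap_multiplication_module M.
Proof.
move=> gen N [[subN _] _]; exists (colon N); split; first exact: is_ideal_colon.
exact: cyclic_submodule_colon.
Qed.

End Multiplication.

Section Divisible.
Variable R : idomainType.

Lemma zero_ideal_two_absorbing_primary (I : R -> Prop) :
  (forall r, I r <-> r = 0) -> two_absorbing_primary I.
Proof.
move=> I0; split.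
  split; last by move/I0/eqP; rewrite oner_eq0.
  split; first exact/I0.
    by move=> a b /I0 -> /I0 ->; apply/I0; rewrite addr0.
  by move=> r a /I0 ->; apply/I0; rewrite mulr0.
move=> a b c /I0/eqP; rewrite !mulf_eq0 => /orP[/orP[]|] /eqP->.
- by constructor 1; apply/I0; rewrite mul0r.
- by constructor 1; apply/I0; rewrite mulr0.
- by constructor 2; exists 1%N; apply/I0; rewrite mulr0 expr1.
Qed.

Variable M : lmodType R.

Definition divisible_module : Prop :=
  forall r : R, r != 0 -> forall m : M, exists y, m = r *: y.

Hypothesis divM : divisible_module.

Lemma divisible_colon_proper_eq0 (N : M -> Prop) r :
  proper_submodule N -> colon N r -> r = 0.
Proof.
move=> [_ [y Ny]] Nr; apply/eqP; apply: contra_notT Ny => r0.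
by have [z ->] := divM r0 y.
Qed.

Lemma divisible_proper_pap (N : M -> Prop) :
  proper_submodule N -> pseudo_absorbing_primary N.
Proof.
move=> propN; split=> //; apply: zero_ideal_two_absorbing_primary => r.
split; first exact: divisible_colon_proper_eq0.
by move=> -> m; rewrite scale0r; case: propN => -[].
Qed.

(* Some coefficient of a nonzero element of IM is a nonzero element of I,
   and its multiples already exhaust M. *)
Lemma divisible_ideal_smul_full (I : R -> Prop) (x : M) :
  ideal_smul I x -> x != 0 -> forall y : M, ideal_smul I y.
Proof.
move=> [s [sI ->]] x0 y.
case: (boolP (has (fun p : R * M => p.1 != 0) s)) => [/hasP [[r m] rs /= r0] | /hasPn all0].
  have [z ->] := divM r0 y; exists [:: (r, z)]; split; last by rewrite big_seq1.
  by move=> p; rewrite mem_seq1 => /eqP ->; apply: sI (r, m) rs.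
case/eqP: x0; rewrite big_seq big1 // => p /all0 /negPn /eqP ->.
by rewrite scale0r.
Qed.

Lemma divisible_not_pap_multiplication (N : M -> Prop) (x y : M) :
  is_submodule N -> N x -> x != 0 -> ~ N y -> ~ pap_multiplication_module M.
Proof.
move=> subN Nx x0 Ny pap.
have [|I [_ NI]] := pap N; first by apply: divisible_proper_pap; split; last exists y.
by apply: Ny; apply/NI; apply: divisible_ideal_smul_full x0 _; apply/NI.
Qed.

End Divisible.

Section Injective.
Variable R : idomainType.

Definition scalev {V : lmodType R} (v : V) : R^o -> V := fun a => a *: v.

Fact scalev_is_linear (V : lmodType R) (v : V) : linear (scalev v).
Proof. by move=> a b c; rewrite /scalev scalerDl scalerA. Qed.

HB.instance Definition _ (V : lmodType R) (v : V) :=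
  GRing.isLinear.Build R R^o V *:%R (scalev v) (@scalev_is_linear V v).

Lemma injective_divisible (E : lmodType R) :
  injective_module E -> divisible_module E.
Proof.
move=> injE r r0 m.
have injr : injective ( *:%R r : R^o -> R^o) by apply: mulfI.
have [k kE] := injE _ _ _ (scalev m) injr.
exists (k 1); rewrite -linearZ kE; exact: (esym (scale1r m)).
Qed.

End Injective.

Lemma maximal_ideal_nonzero (R : idomainType) (P : R -> Prop) :
  maximal_ideal P -> (exists x : R, x != 0 /\ x \isn't a GRing.unit) ->
  exists2 p, P p & p != 0.
Proof.
move=> [_ Pmax] [x [x0 xnu]]; apply: NNPP => noP.
have Px : forall y, P y -> cyclic_submodule (x : R^o) y.
  move=> y Py; case: (eqVneq y 0) => [->|y0]; first by exists 0; rewrite scale0r.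
  by case: noP; exists y.
case: (Pmax _ (cyclic_submodule_is_submodule (x : R^o)) Px) => [xP|x1].
  by apply: noP; exists x => //; apply/xP; exists 1; rewrite scale1r.
have [r /esym r1] := x1 1.
by case/negP: xnu; apply/unitrPr; exists r; rewrite mulrC.
Qed.

Lemma injective_hull_not_pap_multiplication (R : idomainType) (P : R -> Prop)
    (E : lmodType R) (e : E) :
  ~ P 1 -> (exists2 p, P p & p != 0) ->
  injective_hull_of_quotient P e -> ~ pap_multiplication_module E.
Proof.
move=> P1 [p Pp p0] [injE ann _].
have divE := injective_divisible injE.
have e0 : e != 0 by apply: contra_notN P1 => /eqP e0; apply/ann; rewrite e0 scaler0.
have [y ey] := divE p p0 e.
apply: (divisible_not_pap_multiplication divE (cyclic_submodule_is_submodule e)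
  (x := e) (y := y)) => //; first by exists 1; rewrite scale1r.
case=> t yt; case/eqP: e0.
by rewrite ey yt scalerA mulrC -scalerA (proj2 (ann p) Pp) scaler0.
Qed.

Lemma fracmod_divisible (R : idomainType) : divisible_module (fracmod R).
Proof.
move=> r r0 m; exists ((tofrac r)^-1 * m : {fraction R}).
by rewrite /GRing.scale /= /fracmod_scale mulrA mulfV ?mul1r // tofrac_eq0.
Qed.

Lemma fracmod_not_pap_multiplication (R : idomainType) :
  (exists x : R, x != 0 /\ x \isn't a GRing.unit) ->
  ~ pap_multiplication_module (fracmod R).
Proof.
move=> [x [x0 xnu]].
pose one : fracmod R := 1%R : {fraction R}.
apply: (@divisible_not_pap_multiplication _ _ (@fracmod_divisible R) _ one
  (tofrac x)^-1 (cyclic_submodule_is_submodule one)).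
- by exists 1; rewrite scale1r.
- exact: oner_neq0.
case=> t; rewrite /GRing.scale /= /fracmod_scale mulr1 => /(congr1 ( *%R (tofrac x))).
rewrite mulfV ?tofrac_eq0 // -rmorphM -(rmorph1 (@tofrac R)) => /eqP.
by rewrite tofrac_eq => /eqP xt; case/negP: xnu; apply/unitrPr; exists t.
Qed.

Theorem proposition2p5 (R : idomainType) (P : R -> Prop) :
  DVD_with_max P ->
  [/\ (forall (E : lmodType R) (e : E),
         injective_hull_of_quotient P e -> ~ pap_multiplication_module E),
      ~ pap_multiplication_module (fracmod R),
      pap_multiplication_module R^o &
      (forall n : nat, (1 <= n)%N ->
         forall (M : lmodType R) (m : M),
           cyclic_iso_quot (ideal_pow P n) m -> pap_multiplication_module M)].
Proof.
case=> _ nonfield Pmax _; have [[_ P1] _] := Pmax.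
split.
- move=> E e; apply: injective_hull_not_pap_multiplication P1 _.
  exact: maximal_ideal_nonzero Pmax nonfield.
- exact: fracmod_not_pap_multiplication.
- apply: (@cyclic_pap_multiplication _ _ (1 : R^o)) => x.
  by exists x; rewrite /GRing.scale /= mulr1.
- by move=> n _ M m [_ gen]; apply: cyclic_pap_multiplication gen.
Qed.
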